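(* Let $R$ be a ring and $\mathbf{M}$ a class of left $R$-modules closed under isomorphism and under arbitrary direct sums. Let $0\to A\to M\to N$ be an exact sequence of left $R$-modules with $M,N\in\mathbf{M}$. Then $A$ is isomorphic to the inverse limit of an inverse system indexed by $\omega_1$ (the first uncountable ordinal) of modules in $\mathbf{M}$ with surjective connecting homomorphisms.
   Context: Rings are associative with unit, modules are unital. *)

(* Left R-modules are [lmodType R] for a ring [R : pzRingType]
   (associative, unital; the zero ring is allowed). *)
From HB Require Import structures.
From mathcomp Require Import all_boot all_order all_algebra.
Set Implicit Arguments. Unset Strict Implicit. Unset Printing Implicit Defensive.
Import GRing.Theory.
Local Open Scope ring_scope.

Definition countable_type (T : Type) : Prop := exists f : T -> nat, injective f.

(* This characterizes omega_1 up to order isomorphism. *)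
Record is_omega1 (I : Type) (lt : I -> I -> Prop) : Prop := {
  om1_irrefl : forall i, ~ lt i i;
  om1_trans  : forall i j k, lt i j -> lt j k -> lt i k;
  om1_total  : forall i j, lt i j \/ i = j \/ lt j i;
  om1_wf     : well_founded lt;
  om1_uncountable : ~ countable_type I;
  om1_segments : forall i, countable_type {j : I | lt j i}
}.

Definition leq_of (I : Type) (lt : I -> I -> Prop) (i j : I) : Prop :=
  lt i j \/ i = j.

Definition mod_iso (R : pzRingType) (M N : lmodType R) : Prop :=
  exists f : {linear M -> N}, bijective f.

Definition closed_under_iso (R : pzRingType) (P : lmodType R -> Prop) : Prop :=
  forall M N : lmodType R, mod_iso M N -> P M -> P N.

Definition is_direct_sum (R : pzRingType) (J : Type) (F : J -> lmodType R)
    (S : lmodType R) (iota : forall j, {linear F j -> S}) : Prop :=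
  forall (T : lmodType R) (g : forall j, {linear F j -> T}),
    exists h : {linear S -> T},
      (forall j x, h (iota j x) = g j x) /\
      (forall h' : {linear S -> T}, (forall j x, h' (iota j x) = g j x) ->
         forall s, h' s = h s).

Definition closed_under_direct_sums (R : pzRingType) (P : lmodType R -> Prop)
  : Prop :=
  forall (J : Type) (F : J -> lmodType R) (S : lmodType R)
         (iota : forall j, {linear F j -> S}),
    (forall j, P (F j)) -> is_direct_sum iota -> P S.

Definition left_exact (R : pzRingType) (A M N : lmodType R)
    (u : {linear A -> M}) (v : {linear M -> N}) : Prop :=
  injective u /\ (forall m, v m = 0 <-> exists a, u a = m).

(* An inverse system (Mi, f i j : Mj -> Mi for i <= j) over (I, lt).
   Only the maps with i <= j are meaningful. *)
Definition inverse_system (R : pzRingType) (I : Type) (lt : I -> I -> Prop)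
    (Mi : I -> lmodType R) (f : forall i j : I, {linear Mi j -> Mi i}) : Prop :=
  (forall i x, f i i x = x) /\
  (forall i j k, leq_of lt i j -> leq_of lt j k ->
     forall x, f i j (f j k x) = f i k x).

Definition surjective_connecting (R : pzRingType) (I : Type)
    (lt : I -> I -> Prop) (Mi : I -> lmodType R)
    (f : forall i j : I, {linear Mi j -> Mi i}) : Prop :=
  forall i j, leq_of lt i j -> forall y : Mi i, exists x : Mi j, f i j x = y.

(* (A, p) is (isomorphic to) the inverse limit of the system: the canonical map
   a |-> (p i a)_i is a bijection from A onto the module of threads
   {x in prod_i Mi | f i j (x j) = x i for i <= j}, and the p i are compatible. *)
Definition is_inverse_limit (R : pzRingType) (I : Type) (lt : I -> I -> Prop)
    (Mi : I -> lmodType R) (f : forall i j : I, {linear Mi j -> Mi i})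
    (A : lmodType R) (p : forall i, {linear A -> Mi i}) : Prop :=
  (forall i j, leq_of lt i j -> forall a, f i j (p j a) = p i a) /\
  (forall a b, (forall i, p i a = p i b) -> a = b) /\
  (forall x : forall i, Mi i,
     (forall i j, leq_of lt i j -> f i j (x j) = x i) ->
     exists a, forall i, p i a = x i).

From HB Require Import structures.
From mathcomp Require Import all_boot all_order all_algebra.
From mathcomp Require Import boolp functions.

Set Implicit Arguments. Unset Strict Implicit. Unset Printing Implicit Defensive.
Import GRing.Theory.
Local Open Scope ring_scope.

(* For a set S let W(S) be the pullback of v and of the summation map
   N^(S) -> N: the pairs (m, y) with y : S -> N finitely supported and
   sum y = v m.  A map S -> S' induces W(S) -> W(S') by pushing y forward, and
   when S has a point p, W(S) is the direct sum of M and of copies of N indexed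
   by S \ {p}, hence lies in P.  The kernel A embeds in every W(S) as
   the pairs (u a, 0).  For i < omega_1 let S_i be the set of labellings of the
   segment below i by natural numbers with finite fibres; restriction maps
   S_j -> S_i are onto.  A thread (m, y_i)_i of the system W(S_i) has all
   y_i = 0, because a nonzero compatible family of finitely supported
   functions on the S_i would make omega_1 countable; then v m = 0, so the
   thread comes from A. *)

Section FiniteSupport.
Variable S : choiceType.

Definition covers (V : zmodType) (y : S -> V) (l : seq S) : Prop :=
  forall s, y s != 0 -> s \in l.

Definition finsupp (V : zmodType) (y : S -> V) : Prop := exists l, covers y l.

(* A duplicate-free list covering a finitely supported function, chosen
   classically (and empty for functions of infinite support). *)
Definition supp (V : zmodType) (y : S -> V) : seq S :=
  if pselect (finsupp y) is left H then undup (projT1 (cid H)) else [::].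

Lemma supp_uniq (V : zmodType) (y : S -> V) : uniq (supp y).
Proof. by rewrite /supp; case: pselect => // H; exact: undup_uniq. Qed.

Lemma supp_covers (V : zmodType) (y : S -> V) : finsupp y -> covers y (supp y).
Proof.
by rewrite /supp; case: pselect => // H _ s /(projT2 (cid H)); rewrite mem_undup.
Qed.

Lemma covers_eq0 (V : zmodType) (y : S -> V) l s :
  covers y l -> s \notin l -> y s = 0.
Proof. by move=> yl sl; apply/eqP; apply: contraNT sl => /yl. Qed.

Lemma big_covers (T : zmodType) (F : S -> T) l1 l2 : uniq l1 -> uniq l2 ->
  covers F l1 -> covers F l2 -> \sum_(s <- l1) F s = \sum_(s <- l2) F s.
Proof.
move=> u1 u2 c1 c2.
have nz l : \sum_(s <- l) F s = \sum_(s <- l | F s != 0) F s.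
  by rewrite (bigID (fun s => F s == 0)) /= big1 ?add0r // => s /eqP.
rewrite nz [RHS]nz -(big_filter l1) -(big_filter l2).
apply/perm_big/uniq_perm; rewrite ?filter_uniq // => s; rewrite !mem_filter.
by have [//|Fs] := eqVneq (F s) 0; rewrite /= (c1 _ Fs) (c2 _ Fs).
Qed.

Lemma sum_supp (V T : zmodType) (y : S -> V) (F : S -> T) l :
  finsupp y -> uniq l -> covers y l -> (forall s, y s = 0 -> F s = 0) ->
  \sum_(s <- supp y) F s = \sum_(s <- l) F s.
Proof.
move=> fy ul yl F0; have Fy (l' : seq S) : covers y l' -> covers F l'.
  by move=> yl' s; apply: contraR => /(covers_eq0 yl') /F0 ->; rewrite eqxx.
exact: big_covers (supp_uniq y) ul (Fy _ (supp_covers fy)) (Fy _ yl).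
Qed.

Lemma big_seq_pred1 (T : zmodType) (r : seq S) x (F : S -> T) : uniq r ->
  \sum_(s <- r | s == x) F s = if x \in r then F x else 0.
Proof.
move=> ur; case: ifP => xr.
  by rewrite -big_filter filter_pred1_uniq ?big_seq1.
by rewrite big1_seq // => s /andP[/eqP -> sr]; rewrite sr in xr.
Qed.

Lemma sum_supp_pred1 (V : zmodType) (y : S -> V) s : finsupp y ->
  \sum_(t <- supp y | t == s) y t = y s.
Proof.
move=> fy; rewrite big_seq_pred1 ?supp_uniq //; case: ifP => // ns.
by rewrite (covers_eq0 (supp_covers fy)) ?ns.
Qed.

Lemma finsupp_map (V T : zmodType) (F : S -> V -> T) (y : S -> V) :
  (forall s, F s 0 = 0) -> finsupp y -> finsupp (fun s => F s (y s)).
Proof.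
move=> F0 [l yl]; exists l => s; apply: contraR => /(covers_eq0 yl) ->.
by rewrite F0 eqxx.
Qed.

End FiniteSupport.

Section LinearFiniteSupport.
Variables (R : pzRingType) (N : lmodType R) (S : choiceType).

Lemma fctDZ (a : R) (y1 y2 : S -> N) s : (a *: y1 + y2) s = a *: y1 s + y2 s.
Proof. by []. Qed.

Lemma finsupp0 : finsupp (0 : S -> N).
Proof. by exists [::] => s; rewrite eqxx. Qed.

Lemma covers_lin a (y1 y2 : S -> N) l :
  covers y1 l -> covers y2 l -> covers (a *: y1 + y2) l.
Proof.
move=> c1 c2 s; apply: contraR => sl.
by rewrite fctDZ (covers_eq0 c1 sl) (covers_eq0 c2 sl) scaler0 addr0.
Qed.

Definition cover2 (y1 y2 : S -> N) := undup (supp y1 ++ supp y2).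

Lemma cover2_covers (y1 y2 : S -> N) : finsupp y1 -> finsupp y2 ->
  covers y1 (cover2 y1 y2) /\ covers y2 (cover2 y1 y2).
Proof.
move=> f1 f2; split=> s ys; rewrite mem_undup mem_cat.
  by rewrite (supp_covers f1 ys).
by rewrite (supp_covers f2 ys) orbT.
Qed.

Lemma finsuppD a (y1 y2 : S -> N) :
  finsupp y1 -> finsupp y2 -> finsupp (a *: y1 + y2).
Proof.
move=> f1 f2; have [c1 c2] := cover2_covers f1 f2.
by exists (cover2 y1 y2); apply: covers_lin.
Qed.

Lemma finsuppB (y1 y2 : S -> N) : finsupp y1 -> finsupp y2 -> finsupp (y1 - y2).
Proof. by move=> f1 f2; rewrite addrC -scaleN1r; apply: finsuppD. Qed.

End LinearFiniteSupport.

Definition push (S S' : choiceType) (V : zmodType) (phi : S -> S') (y : S -> V)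
  : S' -> V := fun t => \sum_(s <- supp y | phi s == t) y s.

Definition ssum (S : choiceType) (V : zmodType) (y : S -> V) : V :=
  \sum_(s <- supp y) y s.

Section Pushforward.
Variables (S S' : choiceType) (V : zmodType).
Implicit Types (y : S -> V) (phi : S -> S').

Lemma push_covers phi y l t : finsupp y -> uniq l -> covers y l ->
  push phi y t = \sum_(s <- l | phi s == t) y s.
Proof.
move=> fy ul yl; rewrite /push !(big_mkcond (fun s => phi s == t)).
by apply: sum_supp => // s ->; case: ifP.
Qed.

Lemma push_neq0 phi y t : push phi y t != 0 -> exists2 s, phi s = t & y s != 0.
Proof.
apply: contraNP => /forall2NP none; rewrite /push big1 // => s /eqP phis.
by have [] := none s => // /negP; rewrite negbK => /eqP.
Qed.

Lemma finsupp_push phi y : finsupp y -> finsupp (push phi y).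
Proof.
move=> fy; exists (map phi (supp y)) => t /push_neq0 [s <- ys].
by rewrite map_f ?(supp_covers fy).
Qed.

Lemma eq_push phi psi y : phi =1 psi -> push phi y = push psi y.
Proof. by move=> E; apply: funext => t; apply: eq_bigl => s; rewrite E. Qed.

Lemma push_inj phi y s : injective phi -> finsupp y -> push phi y (phi s) = y s.
Proof.
move=> iphi fy; rewrite /push (eq_bigl (fun t => t == s)) ?sum_supp_pred1 //.
by move=> t; rewrite inj_eq.
Qed.

Lemma push_id (phi : S -> S) y : phi =1 id -> finsupp y -> push phi y = y.
Proof.
move=> E fy; apply: funext => t.
by rewrite /push (eq_bigl (fun s => s == t)) ?sum_supp_pred1 // => s; rewrite E.
Qed.

End Pushforward.

(* Functoriality of the pushforward: pushing along phi then psi is pushing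
   along psi \o phi.  Both sides sum y over the fibre of psi \o phi, grouped
   by the value of phi. *)
Lemma push_comp (S S' S'' : choiceType) (V : zmodType)
  (psi : S' -> S'') (phi : S -> S') (y : S -> V) :
  finsupp y -> push psi (push phi y) = push (psi \o phi) y.
Proof.
move=> fy; apply: funext => w.
have uim := undup_uniq (map phi (supp y)).
have cim : covers (push phi y) (undup (map phi (supp y))).
  by move=> t /push_neq0 [s <- ys]; rewrite mem_undup map_f ?(supp_covers fy).
rewrite (push_covers _ _ (finsupp_push phi fy) uim cim) /push.
rewrite (exchange_big_dep (fun s => psi (phi s) == w)) /=; last first.
  by move=> t s /eqP <- /eqP ->.
rewrite big_seq_cond [RHS]big_seq_cond; apply: eq_bigr => s /andP[ys /eqP psis].
rewrite (eq_bigl (fun t => t == phi s)) ?big_seq_pred1 ?mem_undup ?map_f //.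
by move=> t; apply/andP/eqP => [[_ /eqP ->]|->] //; rewrite psis !eqxx.
Qed.

Lemma ssum_pushE (S : choiceType) (V : zmodType) (y : S -> V) :
  ssum y = push (fun _ => tt) y tt.
Proof. by []. Qed.

Lemma ssum_covers (S : choiceType) (V : zmodType) (y : S -> V) l :
  finsupp y -> uniq l -> covers y l -> ssum y = \sum_(s <- l) y s.
Proof. by move=> fy ul yl; apply: sum_supp. Qed.

Lemma ssum_push (S S' : choiceType) (V : zmodType) (phi : S -> S') (y : S -> V) :
  finsupp y -> ssum (push phi y) = ssum y.
Proof. by move=> fy; rewrite !ssum_pushE push_comp. Qed.

Section PushLinear.
Variables (R : pzRingType) (N : lmodType R) (S S' : choiceType).

Lemma pushD (phi : S -> S') a (y1 y2 : S -> N) : finsupp y1 -> finsupp y2 ->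
  push phi (a *: y1 + y2) = a *: push phi y1 + push phi y2.
Proof.
move=> f1 f2; apply: funext => t; have [c1 c2] := cover2_covers f1 f2.
have u : uniq (cover2 y1 y2) := undup_uniq _.
rewrite fctDZ (push_covers _ _ f1 u c1) (push_covers _ _ f2 u c2).
rewrite (push_covers _ _ (finsuppD a f1 f2) u (covers_lin c1 c2)).
by rewrite scaler_sumr -big_split.
Qed.

Lemma push0 (phi : S -> S') : push phi (0 : S -> N) = 0.
Proof. by apply: funext => t; rewrite /push big1. Qed.

End PushLinear.

Section SumLinear.
Variables (R : pzRingType) (N : lmodType R) (S : choiceType).

Lemma ssumD a (y1 y2 : S -> N) : finsupp y1 -> finsupp y2 ->
  ssum (a *: y1 + y2) = a *: ssum y1 + ssum y2.
Proof. by move=> f1 f2; rewrite !ssum_pushE pushD. Qed.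

Lemma ssum0 : ssum (0 : S -> N) = 0.
Proof. by rewrite ssum_pushE push0. Qed.

Lemma ssumB (y1 y2 : S -> N) : finsupp y1 -> finsupp y2 ->
  ssum (y1 - y2) = ssum y1 - ssum y2.
Proof. by move=> f1 f2; rewrite addrC -scaleN1r ssumD // scaleN1r addrC. Qed.

End SumLinear.

Lemma ssum_map (S : choiceType) (V T : zmodType) (F : S -> V -> T) (y : S -> V) :
  (forall s, F s 0 = 0) -> finsupp y ->
  ssum (fun s => F s (y s)) = \sum_(s <- supp y) F s (y s).
Proof.
move=> F0 fy; rewrite /ssum.
apply: (sum_supp (finsupp_map F0 fy) (supp_uniq y)) => // s.
by apply: contraR => /(covers_eq0 (supp_covers fy)) ->; rewrite F0 eqxx.
Qed.

Section PointMass.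
Variables (S : choiceType) (V : zmodType).

Definition delta (q : S) (n : V) : S -> V := fun s => if s == q then n else 0.

Lemma delta_covers (q : S) (n : V) : covers (delta q n) [:: q].
Proof. by move=> s; rewrite mem_seq1 /delta; case: (s == q); rewrite ?eqxx. Qed.

Lemma finsupp_delta (q : S) (n : V) : finsupp (delta q n).
Proof. by exists [:: q]; apply: delta_covers. Qed.

Lemma ssum_delta (q : S) (n : V) : ssum (delta q n) = n.
Proof.
rewrite (ssum_covers (finsupp_delta q n) _ (@delta_covers q n)) //.
by rewrite big_seq1 /delta eqxx.
Qed.

Lemma delta_sum q (r : seq S) (F : S -> V) :
  delta q (\sum_(s <- r) F s) = \sum_(s <- r) delta q (F s).
Proof.
apply: funext => t; rewrite fct_sumE /delta /=.
by case: ifP => _ //; rewrite big1.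
Qed.

Lemma sum_delta (y : S -> V) : finsupp y -> \sum_(s <- supp y) delta s (y s) = y.
Proof.
move=> fy; apply: funext => t; rewrite fct_sumE /delta -big_mkcond /=.
by rewrite (eq_bigl (fun s => s == t)) ?sum_supp_pred1 // => s; rewrite eq_sym.
Qed.

End PointMass.

Lemma deltaZD (R : pzRingType) (N : lmodType R) (S : choiceType) (q : S) a
  (n1 n2 : N) : delta q (a *: n1 + n2) = a *: delta q n1 + delta q n2.
Proof.
apply: funext => s; rewrite fctDZ /delta.
by case: (s == q); rewrite ?scaler0 ?addr0.
Qed.

Definition mkLin (R : pzRingType) (U V : lmodType R) (f : U -> V) (H : linear f)
  : {linear U -> V} := HB.pack f (GRing.isLinear.Build _ _ _ _ f H).

Lemma pairZD (R : pzRingType) (U V : lmodType R) a (x y : U * V) :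
  a *: x + y = (a *: x.1 + y.1, a *: x.2 + y.2).
Proof. by case: x; case: y. Qed.

Section Pullback.
Variables (R : pzRingType) (M N : lmodType R) (v : {linear M -> N}).

(* [pullback v S] is the pullback of [v : M -> N] along the summation map
   N^(S) -> N: the pairs (m, y) with y finitely supported and ssum y = v m. *)
Definition pullback_pred (S : choiceType) : {pred M * (S -> N)} :=
  fun x => `[< finsupp x.2 /\ ssum x.2 = v x.1 >].

Lemma pullback_closed (S : choiceType) : submod_closed (@pullback_pred S).
Proof.
split.
  by apply/asboolP; split; [exact: finsupp0 | rewrite ssum0 /= linear0].
move=> a x y /asboolP[fx sx] /asboolP[fy sy]; apply/asboolP; split.
  exact: finsuppD.
by rewrite /= ssumD // sx sy linearP.
Qed.

HB.instance Definition _ (S : choiceType) :=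
  GRing.isSubmodClosed.Build R (M * (S -> N))%type (@pullback_pred S)
    (pullback_closed S).

Definition pullback (S : choiceType) :=
  {x : M * (S -> N) | x \in @pullback_pred S}.
HB.instance Definition _ (S : choiceType) :=
  [isSub of pullback S for (@sval _ (fun x => x \in @pullback_pred S))].
HB.instance Definition _ (S : choiceType) := [Choice of pullback S by <:].
HB.instance Definition _ (S : choiceType) :=
  [SubChoice_isSubLmodule of pullback S by <:].

Definition pbpair (S : choiceType) (m : M) (y : S -> N)
  (fy : finsupp y) (sy : ssum y = v m) : pullback S :=
  exist _ (m, y) (asboolT (conj fy sy)).

Lemma pb_finsupp (S : choiceType) (w : pullback S) : finsupp (val w).2.
Proof. by case: w => x /= /asboolP[]. Qed.

Lemma pb_sum (S : choiceType) (w : pullback S) : ssum (val w).2 = v (val w).1.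
Proof. by case: w => x /= /asboolP[]. Qed.

Section PullbackMap.
Variables (S S' : choiceType) (phi : S -> S').

Definition pbmap_fun (w : pullback S) : pullback S' :=
  pbpair (finsupp_push phi (pb_finsupp w))
    (etrans (ssum_push phi (pb_finsupp w)) (pb_sum w)).

Lemma pbmap_lin : linear pbmap_fun.
Proof.
by move=> a w1 w2; apply: val_inj; rewrite /= pushD //; apply: pb_finsupp.
Qed.

Definition pbmap : {linear pullback S -> pullback S'} := mkLin pbmap_lin.

Lemma pbmapE w : val (pbmap w) = ((val w).1, push phi (val w).2).
Proof. by []. Qed.

End PullbackMap.

Lemma pbmap_id (S : choiceType) (phi : S -> S) w : phi =1 id -> pbmap phi w = w.
Proof.
move=> E; apply: val_inj; rewrite pbmapE (push_id E (pb_finsupp w)).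
by case: w => [[]].
Qed.

Lemma pbmap_comp (S S' S'' : choiceType) (psi : S' -> S'') (phi : S -> S')
  (chi : S -> S'') w : psi \o phi =1 chi -> pbmap psi (pbmap phi w) = pbmap chi w.
Proof.
move=> E; apply: val_inj.
by rewrite !pbmapE (push_comp psi phi (pb_finsupp w)) (eq_push _ E).
Qed.

Section KernelEmbedding.
Variables (A : lmodType R) (u : {linear A -> M}) (vu : forall a, v (u a) = 0).
Variable S : choiceType.

Definition pbker_fun (a : A) : pullback S :=
  pbpair (finsupp0 _ _) (etrans (ssum0 _ _) (esym (vu a))).

Lemma pbker_lin : linear pbker_fun.
Proof.
by move=> a x y; apply: val_inj; rewrite /= pairZD /= linearP scaler0 addr0.
Qed.

Definition pbker : {linear A -> pullback S} := mkLin pbker_lin.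

Lemma pbkerE a : val (pbker a) = (u a, 0).
Proof. by []. Qed.

End KernelEmbedding.

Lemma pbmap_ker (A : lmodType R) (u : {linear A -> M})
  (vu : forall a, v (u a) = 0) (S S' : choiceType)
  (phi : S -> S') a : pbmap phi (pbker vu S a) = pbker vu S' a.
Proof. by apply: val_inj; rewrite pbmapE /= push0. Qed.

End Pullback.

Section PullbackDirectSum.
Variables (R : pzRingType) (M N : lmodType R) (v : {linear M -> N}).
Variables (S : choiceType) (p : S).

Definition incM_fun (m : M) : pullback v S :=
  pbpair (finsupp_delta p (v m)) (ssum_delta p (v m)).

Lemma incM_lin : linear incM_fun.
Proof.
by move=> a m1 m2; apply: val_inj; rewrite /= pairZD /= !linearP deltaZD.
Qed.

Definition incM : {linear M -> pullback v S} := mkLin incM_lin.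

Lemma ssum_incN q (n : N) : ssum (delta q n - delta p n) = v 0.
Proof. by rewrite ssumB ?ssum_delta ?subrr ?linear0 //; exact: finsupp_delta. Qed.

Definition incN_fun q (n : N) : pullback v S :=
  pbpair (finsuppB (finsupp_delta q n) (finsupp_delta p n)) (ssum_incN q n).

Lemma incN_lin q : linear (incN_fun q).
Proof.
move=> a n1 n2; apply: val_inj; rewrite /= pairZD /= scaler0 addr0 !deltaZD.
by rewrite scalerBr addrACA opprD.
Qed.

Definition incN q : {linear N -> pullback v S} := mkLin (incN_lin q).

Lemma incN_p n : incN p n = 0.
Proof. by apply: val_inj; rewrite /= subrr. Qed.

Definition summand (j : option {s : S | s <> p}) : lmodType R :=
  if j is Some _ then N else M.

Definition summand_inc (j : option {s : S | s <> p}) :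
  {linear summand j -> pullback v S} :=
  if j is Some q then incN (sval q) else incM.

(* Every element (m, y) decomposes as (m, v m at p) plus, for each s in the
   support of y, (0, y s at s - y s at p); this is where sum y = v m is used. *)
Lemma pullback_decomp (w : pullback v S) :
  w = incM (val w).1 + \sum_(s <- supp (val w).2) incN s ((val w).2 s).
Proof.
apply: val_inj; rewrite raddfD raddf_sum.
case: w => -[m y] /= /asboolP[fy sy]; apply: injective_projections => /=.
  by rewrite (raddf_sum (@fst _ _)) big1 ?addr0.
rewrite (raddf_sum (@snd _ _)) /= sumrB sum_delta // -delta_sum -/(ssum y) sy.
by rewrite addrC subrK.
Qed.

Section UniversalMap.
Variables (T : lmodType R) (g : forall j, {linear summand j -> T}).

Definition gN (s : S) (n : N) : T :=
  if pselect (s <> p) is left H then g (Some (exist _ s H)) n else 0.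

Lemma gN0 s : gN s 0 = 0.
Proof. by rewrite /gN; case: pselect => // H; rewrite linear0. Qed.

Lemma gNp n : gN p n = 0.
Proof. by rewrite /gN; case: pselect. Qed.

Lemma gNE q (Hq : q <> p) n : gN q n = g (Some (exist _ q Hq)) n.
Proof. by rewrite /gN; case: pselect => // H; rewrite (Prop_irrelevance H Hq). Qed.

Lemma gNZD s a n1 n2 : gN s (a *: n1 + n2) = a *: gN s n1 + gN s n2.
Proof. by rewrite /gN; case: pselect => H; rewrite ?linearP // scaler0 addr0. Qed.

Lemma finsupp_gN (w : pullback v S) : finsupp (fun s => gN s ((val w).2 s)).
Proof. exact: finsupp_map gN0 (pb_finsupp w). Qed.

Definition dsum_fun (w : pullback v S) : T :=
  g None (val w).1 + ssum (fun s => gN s ((val w).2 s)).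

Lemma dsum_lin : linear dsum_fun.
Proof.
move=> a w1 w2; rewrite /dsum_fun.
have -> : (fun s => gN s ((val (a *: w1 + w2)).2 s)) =
    a *: (fun s => gN s ((val w1).2 s)) + (fun s => gN s ((val w2).2 s)).
  by apply: funext => s; exact: gNZD.
rewrite (ssumD a (finsupp_gN w1) (finsupp_gN w2)).
by rewrite [val _]/= pairZD /= linearP scalerDr addrACA.
Qed.

Definition dsum_map : {linear pullback v S -> T} := mkLin dsum_lin.

Lemma dsum_map_inc j x : dsum_map (summand_inc j x) = g j x.
Proof.
case: j x => [[q Hq]|] x; rewrite /= /dsum_fun /=.
  have -> : (fun s => gN s (delta q x s - delta p x s)) = delta q (gN q x).
    apply: funext => s; rewrite /delta; case: eqP => [->|_].
      by rewrite (introF eqP Hq) subr0.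
    by case: eqP => [->|_]; rewrite ?subr0 ?sub0r ?gNp ?gN0 ?oppr0.
  by rewrite (linear0 (g None)) add0r ssum_delta (gNE Hq).
have -> : (fun s => gN s (delta p (v x) s)) = 0.
  by apply: funext => s; rewrite /delta; case: eqP => [->|_]; rewrite ?gNp ?gN0.
by rewrite ssum0 addr0.
Qed.

Lemma dsum_map_unique (h : {linear pullback v S -> T}) :
  (forall j x, h (summand_inc j x) = g j x) -> forall w, h w = dsum_map w.
Proof.
move=> hg w; have hM m : h (incM m) = g None m := hg None m.
have hN s n : h (incN s n) = gN s n.
  have [->|/eqP Hs] := eqVneq s p; first by rewrite incN_p linear0 gNp.
  by rewrite (gNE Hs); exact: (hg (Some (exist _ s Hs))).
rewrite [in LHS](pullback_decomp w) linearD linear_sum hM.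
under eq_bigr do rewrite hN.
by rewrite /= /dsum_fun (ssum_map gN0 (pb_finsupp w)).
Qed.

End UniversalMap.

Theorem pullback_direct_sum : is_direct_sum summand_inc.
Proof.
move=> T g; exists (dsum_map g); split; first exact: dsum_map_inc.
exact: dsum_map_unique.
Qed.

Lemma pullback_in_class (P : lmodType R -> Prop) :
  closed_under_direct_sums P -> P M -> P N -> P (pullback v S).
Proof.
move=> HP HM HN; apply: (HP _ _ _ summand_inc _ pullback_direct_sum).
by case.
Qed.

End PullbackDirectSum.

Section PullbackSystem.
Local Unset Implicit Arguments.
Variables (R : pzRingType) (A M N : lmodType R).
Variables (u : {linear A -> M}) (v : {linear M -> N}).
Hypothesis uv : left_exact u v.
Variables (I : Type) (lt : I -> I -> Prop) (S : I -> choiceType).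
Variable pi : forall i j, S j -> S i.
Local Notation le := (leq_of lt).
Hypotheses (le_total : forall i j, le i j \/ le j i)
  (pi_id : forall i s, pi i i s = s)
  (pi_comp : forall i j k s, le i j -> le j k -> pi i j (pi j k s) = pi i k s)
  (pi_surj : forall i j s, le i j -> exists t, pi i j t = s)
  (vanish : forall y : forall i, S i -> N, (forall i, finsupp (y i)) ->
     (forall i j, le i j -> push (pi i j) (y j) = y i) -> forall i, y i = 0).
Variable i0 : I.
Local Set Implicit Arguments.

Let vu a : v (u a) = 0.
Proof. by apply/(proj2 uv); exists a. Qed.

Definition pb_system (i : I) : lmodType R := pullback v (S i).
Definition pb_conn i j : {linear pb_system j -> pb_system i} := pbmap v (pi i j).
Definition pb_proj i : {linear A -> pb_system i} := pbker vu (S i).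

Lemma pb_inverse_system : inverse_system lt pb_conn.
Proof.
split=> [i w|i j k ij jk w]; first by apply: pbmap_id => s; exact: pi_id.
by apply: pbmap_comp => s; exact: pi_comp.
Qed.

Lemma pb_surjective : surjective_connecting lt pb_conn.
Proof.
move=> i j ij w.
pose sec s := projT1 (cid (pi_surj i j s ij)).
exists (pbmap v sec w); rewrite /pb_conn (pbmap_comp (chi := pi i j \o sec)) //.
by apply: pbmap_id => s; exact: (projT2 (cid (pi_surj i j s ij))).
Qed.

(* A thread (m_i, y_i)_i has all y_i = 0 by [vanish] and a constant first
   component m with v m = sum 0 = 0, so it is the image of the a with u a = m;
   injectivity comes from that of u. *)
Lemma pb_inverse_limit : is_inverse_limit lt pb_conn pb_proj.
Proof.
split; first by move=> i j ij a; exact: pbmap_ker.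
split=> [a b pab|x xthread].
  by apply: (proj1 uv); have /(congr1 (fun w => (val w).1)) := pab i0.
pose y i := (val (x i)).2; pose m i := (val (x i)).1.
have y0 : forall i, y i = 0.
  apply: vanish => [i|i j ij]; first exact: pb_finsupp.
  by rewrite /y -(xthread i j ij) /pb_conn pbmapE.
have m_const i j : le i j -> m i = m j.
  by move=> ij; rewrite /m -(xthread i j ij) /pb_conn pbmapE.
have [a ua] : exists a, u a = m i0.
  by apply/(proj2 uv); rewrite -(pb_sum (x i0)) -/(y i0) y0 ssum0.
exists a => i; apply: val_inj; rewrite pbkerE ua.
rewrite [RHS]surjective_pairing -/(m i) -/(y i) y0.
by case: (le_total i0 i) => /m_const ->.
Qed.

End PullbackSystem.

Section StrictTotalOrder.
Variables (I : Type) (lt : I -> I -> Prop).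
Hypotheses (lt_irrefl : forall i, ~ lt i i)
  (lt_trans : forall i j k, lt i j -> lt j k -> lt i k)
  (lt_total : forall i j, lt i j \/ i = j \/ lt j i).

(* If a labelling [g : I -> nat] takes each value only finitely often below any
   point, then I is countable: b |-> (g b, #{c < b | g c = g b}) is injective. *)
Lemma countable_of_finite_fibres (g : I -> nat) :
  (forall b, exists l : seq {classic I},
     forall c, lt c b -> g c = g b -> (c : {classic I}) \in l) ->
  countable_type I.
Proof.
move=> fin.
pose T b : seq {classic I} :=
  undup [seq c : {classic I} <- projT1 (cid (fin b))
          | `[< lt c b >] && (g c == g b)].
have TP b c : (c : {classic I}) \in T b <-> lt c b /\ g c = g b.
  rewrite mem_undup mem_filter; split=> [/andP[/andP[/asboolP cb /eqP gc] _] //|].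
  by case=> cb gc; rewrite asboolT // gc eqxx (projT2 (cid (fin b))).
have size_lt b1 b2 : lt b1 b2 -> g b1 = g b2 -> (size (T b1) < size (T b2))%N.
  move=> lt12 g12; apply: (@uniq_leq_size _ ((b1 : {classic I}) :: T b1)).
    by rewrite /= undup_uniq andbT; apply/negP => /TP[/lt_irrefl].
  move=> c; rewrite inE => /orP[/eqP ->|/TP[cb1 gc]]; apply/TP => //.
  by split; [exact: lt_trans cb1 lt12 | rewrite gc].
exists (fun b => pickle (g b, size (T b))).
move=> b1 b2 /(pcan_inj pickleK_inv)[g12 s12].
have [lt12|[//|lt21]] := lt_total b1 b2.
  by have := size_lt _ _ lt12 g12; rewrite s12 ltnn.
by have := size_lt _ _ lt21 (esym g12); rewrite s12 ltnn.
Qed.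

End StrictTotalOrder.

Section Omega1.
Variables (I : Type) (lt : I -> I -> Prop) (Hom1 : is_omega1 lt).
Local Notation le := (leq_of lt).

Lemma omega1_lt_le_trans a b c : lt a b -> le b c -> lt a c.
Proof. by move=> ab [bc|<-] //; exact: (om1_trans Hom1 ab bc). Qed.

Lemma omega1_le_trans a b c : le a b -> le b c -> le a c.
Proof. by move=> [ab|<-] // bc; left; exact: omega1_lt_le_trans ab bc. Qed.

Lemma omega1_le_total i j : le i j \/ le j i.
Proof.
case: (om1_total Hom1 i j) => [|[->|]].
- by left; left.
- by left; right.
- by right; left.
Qed.

Lemma omega1_inhabited : inhabited I.
Proof.
apply: contrapT => empty; apply: (om1_uncountable Hom1).
by exists (fun _ => 0%N) => x; case: (empty (inhabits x)).
Qed.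

(* Since I is uncountable while its proper initial segments are countable,
   I has no largest element. *)
Lemma omega1_unbounded b : exists j, lt b j.
Proof.
apply: contrapT => /forallNP nogt; apply: (om1_uncountable Hom1).
have [h hinj] := om1_segments Hom1 b.
have le_b j : lt j b \/ j = b.
  by case: (om1_total Hom1 j b) => [|[|/nogt]]; [left|right|].
exists (fun j =>
  if pselect (lt j b) is left H then (h (exist _ j H)).+1 else 0%N).
move=> j1 j2; case: pselect => [H1|N1]; case: pselect => [H2|N2] //.
- by move=> [] /hinj /(congr1 sval).
- by case: (le_b j1) => // ->; case: (le_b j2) => // ->.
Qed.

Lemma omega1_upper b i : exists j, lt b j /\ le i j.
Proof.
have [j bj] := omega1_unbounded b.
case: (om1_total Hom1 j i) => [ji|[<-|ij]].
- by exists i; split; [exact: (om1_trans Hom1 bj ji) | right].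
- by exists j; split; [|right].
- by exists j; split; [|left].
Qed.

Definition labelling_of (i : I) (f : I -> nat) : Prop :=
  (forall b, ~ lt b i -> f b = 0%N) /\
  (forall k, exists l : seq {classic I},
     forall b, lt b i -> f b = k -> (b : {classic I}) \in l).

Definition labelling (i : I) := {classic {f : I -> nat | labelling_of i f}}.
HB.instance Definition _ (i : I) := Choice.on (labelling i).

Lemma labelling_inj i (f g : labelling i) : sval f = sval g -> f = g.
Proof.
case: f g => [f Hf] [g Hg] /= fg; subst g.
by congr exist; exact: Prop_irrelevance.
Qed.

(* Any prescription of labels on part [P] of the segment below [j] that has
   finite fibres extends to a labelling of the whole segment; the remaining
   points get pairwise distinct labels from an injection of the countable
   segment into nat. *)
Lemma labelling_extend j (P : I -> Prop) (f0 : I -> nat) :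
  (forall k, exists l : seq {classic I},
     forall b, lt b j -> P b -> f0 b = k -> (b : {classic I}) \in l) ->
  exists f : labelling j, forall b, lt b j -> P b -> sval f b = f0 b.
Proof.
move=> fin0; have [h hinj] := om1_segments Hom1 j.
pose f b := if pselect (lt b j) is left H then
  (if `[< P b >] then f0 b else h (exist _ b H)) else 0%N.
have fP : labelling_of j f.
  split=> [b nb|k]; first by rewrite /f; case: pselect.
  have [l0 Hl0] := fin0 k.
  have [l1 Hl1] : exists l1 : seq {classic I}, forall b (H : lt b j),
      h (exist _ b H) = k -> (b : {classic I}) \in l1.
    have [[b1 [H1 E1]]|none] :=
      pselect (exists b (H : lt b j), h (exist _ b H) = k).
      exists [:: b1] => b H E; rewrite inE; apply/eqP.
      by have /(congr1 sval) := hinj _ _ (etrans E (esym E1)).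
    by exists [::] => b H E; case: none; exists b, H.
  exists (l0 ++ l1) => b bj; rewrite /f mem_cat; case: pselect => // H.
  by case: asboolP => Pb fb; [rewrite (Hl0 b) | rewrite (Hl1 b H) ?orbT].
exists (exist _ f fP : labelling j) => b bj Pb /=.
by rewrite /f; case: pselect => // H; rewrite asboolT.
Qed.

Definition restrict (i : I) (f : I -> nat) : I -> nat :=
  fun b => if `[< lt b i >] then f b else 0%N.

Lemma labelling_restrict i j f :
  le i j -> labelling_of j f -> labelling_of i (restrict i f).
Proof.
move=> ij [fout ffin]; split=> [b nb|k]; first by rewrite /restrict asboolF.
have [l Hl] := ffin k; exists l => b bi; rewrite /restrict asboolT // => fk.
exact: Hl (omega1_lt_le_trans bi ij) fk.
Qed.

Lemma labelling_exists i : exists f : labelling i, True.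
Proof.
have [|f _] := @labelling_extend i (fun _ => False) (fun _ => 0%N).
  by move=> k; exists [::].
by exists f.
Qed.

(* The connecting maps: restriction from the segment below j to the one below
   i when i <= j (and an arbitrary constant map otherwise). *)
Definition restr (i j : I) (f : labelling j) : labelling i :=
  if pselect (le i j) is left H then
    (exist _ (restrict i (sval f)) (labelling_restrict H (svalP f)) : labelling i)
  else projT1 (cid (labelling_exists i)).
Arguments restr : clear implicits.

Lemma restrE i j f : le i j -> sval (restr i j f) = restrict i (sval f).
Proof. by rewrite /restr; case: pselect. Qed.

Lemma restr_id i f : restr i i f = f.
Proof.
apply: labelling_inj; rewrite restrE; last by right.
apply: funext => b; rewrite /restrict; case: asboolP => // nb.
by rewrite ((svalP f).1 b nb).
Qed.

Lemma restr_comp i j k f :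
  le i j -> le j k -> restr i j (restr j k f) = restr i k f.
Proof.
move=> ij jk; apply: labelling_inj.
rewrite !restrE //; last exact: omega1_le_trans ij jk.
apply: funext => b; rewrite /restrict; case: asboolP => // bi.
by rewrite asboolT //; exact: omega1_lt_le_trans bi ij.
Qed.

Lemma restr_surj i j (g : labelling i) : le i j -> exists f, restr i j f = g.
Proof.
move=> ij; have [|f fg] := @labelling_extend j (fun b => lt b i) (sval g).
  by move=> k; have [l Hl] := (svalP g).2 k; exists l => b _; exact: Hl.
exists f; apply: labelling_inj; rewrite restrE //; apply: funext => b.
rewrite /restrict; case: asboolP => [bi|nb].
  exact: fg (omega1_lt_le_trans bi ij) bi.
by rewrite ((svalP g).1 b nb).
Qed.

(* Suppose y i0 s0 <> 0.  For each b choose J b > b, i0 and a label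
   [label b] such that the labellings f in the support of y (J b) with f b =
   label b and restricting to s0 carry nonzero total mass; by compatibility
   this mass does not depend on the choice of J b.  Then below any b, the
   points with the same label as b are labelled alike by one of the finitely
   many f in the support of y (J b), so there are finitely many of them, and
   I would be countable. *)
Section ThreadsVanish.
Local Unset Implicit Arguments.
Variables (R : pzRingType) (N : lmodType R) (y : forall i, labelling i -> N).
Hypotheses (fin_y : forall i, finsupp (y i))
  (thread_y : forall i j, le i j -> push (restr i j) (y j) = y i).
Variables (i0 : I) (s0 : labelling i0).
Hypothesis y_s0 : y i0 s0 != 0.

(* The joint distribution, under y j, of the label at b and of the
   restriction to the segment below i0. *)
Definition marginal (b j : I) : nat * (I -> nat) -> N :=
  push (fun f : labelling j => (sval f b, restrict i0 (sval f))) (y j).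

Lemma marginal_stable b i j : le i0 i -> le i j -> lt b i ->
  marginal b i = marginal b j.
Proof.
move=> i0i ij bi; rewrite /marginal -(thread_y _ _ ij) push_comp //.
apply: eq_push => f /=; rewrite restrE // /restrict asboolT //; congr pair.
apply: funext => c; case: asboolP => // ci0.
by rewrite asboolT //; exact: omega1_lt_le_trans ci0 i0i.
Qed.

Lemma marginal_indep b i j : le i0 i -> le i0 j -> lt b i -> lt b j ->
  marginal b i = marginal b j.
Proof.
move=> i0i i0j bi bj; case: (om1_total Hom1 i j) => [ij|[<-//|ji]].
  by apply: marginal_stable => //; left.
by symmetry; apply: marginal_stable => //; left.
Qed.

Lemma marginal_total b j : le i0 j -> push snd (marginal b j) (sval s0) = y i0 s0.
Proof.
move=> i0j; rewrite push_comp //.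
rewrite (eq_push (psi := fun f => sval (restr i0 j f))); last first.
  by move=> f /=; rewrite restrE.
rewrite -(push_comp (fun f : labelling i0 => sval f) (restr i0 j)) // thread_y //.
by apply: push_inj => // f g; exact: labelling_inj.
Qed.

Let J_spec b : exists j, lt b j /\ le i0 j := omega1_upper b i0.
Let J b := projT1 (cid (J_spec b)).
Let J_gt b : lt b (J b) := (projT2 (cid (J_spec b))).1.
Let J_ge b : le i0 (J b) := (projT2 (cid (J_spec b))).2.

Lemma label_exists b : exists k, marginal b (J b) (k, sval s0) != 0.
Proof.
have : push snd (marginal b (J b)) (sval s0) != 0 by rewrite marginal_total.
by case/push_neq0 => -[k r] /= ->; exists k.
Qed.

Let label b := projT1 (cid (label_exists b)).
Let label_spec b : marginal b (J b) (label b, sval s0) != 0 :=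
  projT2 (cid (label_exists b)).

Lemma label_witness b c : lt c b ->
  exists2 f : labelling (J b), y (J b) f != 0 & sval f c = label c.
Proof.
move=> cb; have cJb := om1_trans Hom1 cb (J_gt b).
have := label_spec c.
rewrite (marginal_indep _ _ _ (J_ge c) (J_ge b) (J_gt c) cJb).
by case/push_neq0 => f [fc _] yf; exists f.
Qed.

Lemma label_finite_fibres b : exists l : seq {classic I},
  forall c, lt c b -> label c = label b -> (c : {classic I}) \in l.
Proof.
pose fibre (f : labelling (J b)) := projT1 (cid ((svalP f).2 (label b))).
exists (flatten [seq fibre f | f <- supp (y (J b))]) => c cb lc.
have [f yf fc] := label_witness _ _ cb; apply/flatten_mapP; exists f.
  exact: supp_covers.
apply: (projT2 (cid ((svalP f).2 (label b)))); last by rewrite fc.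
exact: (om1_trans Hom1 cb (J_gt b)).
Qed.

Lemma nonzero_thread_countable : countable_type I.
Proof.
exact: (countable_of_finite_fibres (om1_irrefl Hom1) (@om1_trans _ _ Hom1)
  (om1_total Hom1) label_finite_fibres).
Qed.

End ThreadsVanish.

Theorem threads_vanish (R : pzRingType) (N : lmodType R)
  (y : forall i, labelling i -> N) :
  (forall i, finsupp (y i)) ->
  (forall i j, le i j -> push (restr i j) (y j) = y i) -> forall i, y i = 0.
Proof.
move=> fin_y thread_y i; apply: funext => s; apply/eqP; apply: contraT => ys.
case: (om1_uncountable Hom1).
exact: (nonzero_thread_countable _ _ _ fin_y thread_y _ _ ys).
Qed.

End Omega1.

Theorem corollary8 (R : pzRingType) (P : lmodType R -> Prop)
  (HPiso : closed_under_iso P) (HPsum : closed_under_direct_sums P)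
  (A M N : lmodType R) (u : {linear A -> M}) (v : {linear M -> N})
  (Hex : left_exact u v) (HM : P M) (HN : P N)
  (I : Type) (lt : I -> I -> Prop) (Hom1 : is_omega1 lt) :
  exists (Mi : I -> lmodType R) (f : forall i j : I, {linear Mi j -> Mi i})
         (p : forall i, {linear A -> Mi i}),
    (forall i, P (Mi i)) /\ inverse_system lt f /\
    surjective_connecting lt f /\ is_inverse_limit lt f p.
Proof.
have [i0] := omega1_inhabited Hom1.
exists (pb_system v (labelling lt)), (pb_conn v (restr Hom1)),
  (pb_proj Hex (labelling lt)).
split.
  move=> i; have [s _] := labelling_exists Hom1 i.
  exact: (pullback_in_class v s HPsum HM HN).
split; first exact: (pb_inverse_system v (restr_id Hom1) (restr_comp Hom1)).
split; first exact: (pb_surjective (restr_surj Hom1)).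
exact: (pb_inverse_limit Hex (omega1_le_total Hom1)
  (@threads_vanish _ _ Hom1 _ N) i0).
Qed.
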